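(* Let $C>0$, $\epsilon\in(0,1)$ and set $K:=\frac{C\cos\left(\epsilon\frac{\pi}{2}\right)}{3^{\epsilon/2}}$. There exists $k\in(0,1)$ depending on $C$ and $\epsilon$ such that $$k\exp\left(K|z|^\epsilon\right)\le\left|e^{z}\right|\le\exp(|z|)$$ for all $z\in U_C^\epsilon$.
   Context: $H(0)=\{z\in\mathbb{C}:\operatorname{Re}z>0\}$, and $U_C^\epsilon:=\phi_C^\epsilon(H(0))$ where $\phi_C^\epsilon(z)=z+C(1+z)^\epsilon$ with the principal branch of the power function. *)

From Stdlib Require Import Reals.
From Coquelicot Require Import Coquelicot.
Open Scope R_scope.

Definition Cexp (z : C) : C :=
  (exp (Re z) * cos (Im z), exp (Re z) * sin (Im z)).

(* principal argument, values in (-PI, PI] *)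
Definition Carg (z : C) : R :=
  let x := Re z in let y := Im z in
  if Rlt_dec 0 x then atan (y / x)
  else if Rlt_dec x 0 then
         (if Rle_dec 0 y then atan (y / x) + PI else atan (y / x) - PI)
  else if Rlt_dec 0 y then PI / 2
  else if Rlt_dec y 0 then - (PI / 2) else 0.

(* principal logarithm (for z <> 0) *)
Definition Clog (z : C) : C := (ln (Cmod z), Carg z).

Definition Cpow (w : C) (a : R) : C :=
  if Ceq_dec w 0 then 0 else Cexp (RtoC a * Clog w).

Definition H0 (z : C) : Prop := 0 < Re z.

Definition phi (Cc eps : R) (z : C) : C := z + RtoC Cc * Cpow (1 + z) eps.

Definition U (Cc eps : R) (w : C) : Prop := exists z, H0 z /\ w = phi Cc eps z.

From Pilot Require Import Defs.
From Stdlib Require Import Reals Lra.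
From Coquelicot Require Import Coquelicot.
Open Scope R_scope.

(* Write w = z + C (1 + z)^eps with Re z > 0 and t = |1 + z|.  Since
   |Arg (1 + z)| < pi/2, Re w >= C cos(eps pi/2) t^eps, while
   |w| <= t + C t^eps.  If |w| <= sqrt 3 t, then
   K |w|^eps <= C cos(eps pi/2) t^eps <= Re w.  Otherwise
   (sqrt 3 - 1) t < C t^eps, which bounds t and hence |w|, so
   K |w|^eps <= Re w + M for a constant M.  Thus
   |e^w| = e^(Re w) >= e^(-M-1) e^(K |w|^eps), and e^(Re w) <= e^|w|. *)

Lemma exp_le x y : x <= y -> exp x <= exp y.
Proof. intros [Hlt | ->]; [now left; apply exp_increasing | apply Rle_refl]. Qed.

Lemma Rpower_pos x a : 0 < Rpower x a.
Proof. apply exp_pos. Qed.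

Lemma cos_Rabs x : cos (Rabs x) = cos x.
Proof. unfold Rabs; destruct (Rcase_abs x); [apply cos_neg | reflexivity]. Qed.

Lemma cos_le_of_Rabs_le x y : Rabs x <= y <= PI -> cos y <= cos x.
Proof.
  intros [Hxy HyPI]; rewrite <- (cos_Rabs x).
  pose proof (Rabs_pos x).
  apply cos_decr_1; lra.
Qed.

Lemma lt_Rpower_of_sublinear d c eps t :
  0 < d -> 0 < t -> eps < 1 -> d * t < c * Rpower t eps ->
  t < Rpower (c / d) (/ (1 - eps)).
Proof.
  intros Hd Ht Heps Hlt.
  assert (Hsplit : t = Rpower t (1 - eps) * Rpower t eps).
  { rewrite <- Rpower_plus, Rplus_comm, Rplus_minus, Rpower_1; lra. }
  assert (Hsmall : Rpower t (1 - eps) < c / d).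
  { apply Rmult_lt_reg_r with (d * Rpower t eps).
    - apply Rmult_lt_0_compat; [lra | apply Rpower_pos].
    - replace (c / d * (d * Rpower t eps)) with (c * Rpower t eps)
        by (field; lra).
      replace (d * t) with (d * Rpower t (1 - eps) * Rpower t eps) in Hlt
        by (rewrite Rmult_assoc, <- Hsplit; reflexivity).
      lra. }
  replace t with (Rpower (Rpower t (1 - eps)) (/ (1 - eps))) at 1.
  - apply Rlt_Rpower_l; [apply Rinv_0_lt_compat; lra |].
    split; [apply Rpower_pos | exact Hsmall].
  - rewrite Rpower_mult, Rinv_r, Rpower_1; lra.
Qed.

Lemma Rpower_le_of_le_add_pow b c eps :
  1 < b -> 0 <= c -> 0 <= eps < 1 ->
  exists M, 0 <= M /\
    forall t x, 0 < t -> 0 < x -> x <= t + c * Rpower t eps ->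
      Rpower x eps <= Rpower (b * t) eps + M.
Proof.
  intros Hb Hc Heps.
  set (T := Rpower (c / (b - 1)) (/ (1 - eps))).
  exists (Rpower (T + c * Rpower T eps) eps).
  split; [left; apply Rpower_pos |].
  intros t x Ht Hx Hxt.
  pose proof (Rpower_pos (b * t) eps) as Hbt_pos.
  destruct (Rle_or_lt x (b * t)) as [Hxb | Hxb].
  - pose proof (Rle_Rpower_l x (b * t) eps (proj1 Heps) (conj Hx Hxb)).
    pose proof (Rpower_pos (T + c * Rpower T eps) eps); lra.
  - assert (HtT : t < T).
    { apply lt_Rpower_of_sublinear; lra. }
    assert (HtT_pow : Rpower t eps <= Rpower T eps) by (apply Rle_Rpower_l; lra).
    assert (HxT : x <= T + c * Rpower T eps)
      by (pose proof (Rmult_le_compat_l c _ _ Hc HtT_pow); lra).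
    pose proof (Rle_Rpower_l x _ eps (proj1 Heps) (conj Hx HxT)); lra.
Qed.

Lemma Cmod_Cexp z : Cmod (Cexp z) = exp (Re z).
Proof.
  unfold Cmod, Cexp; cbn [fst snd].
  replace ((exp (Re z) * cos (Im z)) ^ 2 + (exp (Re z) * sin (Im z)) ^ 2)
    with (exp (Re z) ^ 2).
  - apply sqrt_pow2; left; apply exp_pos.
  - pose proof (sin2_cos2 (Im z)) as Hpyth; unfold Rsqr in Hpyth; nra.
Qed.

(* [Defs.Cpow] is the real-exponent principal power, not Coquelicot's [Cpow]. *)
Lemma Cpow_nonzero (w : C) (a : R) :
  w <> 0 -> Defs.Cpow w a = Cexp (RtoC a * Clog w).
Proof.
  intros Hw; unfold Defs.Cpow.
  destruct (Ceq_dec w 0); [contradiction | reflexivity].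
Qed.

Lemma Cmod_Cpow (w : C) (a : R) :
  w <> 0 -> Cmod (Defs.Cpow w a) = Rpower (Cmod w) a.
Proof.
  intros Hw; rewrite Cpow_nonzero, Cmod_Cexp by exact Hw.
  unfold Rpower; f_equal; simpl; ring.
Qed.

Lemma Re_Cpow (w : C) (a : R) :
  w <> 0 -> Re (Defs.Cpow w a) = Rpower (Cmod w) a * cos (a * Carg w).
Proof.
  intros Hw; rewrite Cpow_nonzero by exact Hw.
  unfold Rpower; simpl; f_equal; f_equal; ring.
Qed.

Lemma Carg_right_half (w : C) : 0 < Re w -> Rabs (Carg w) < PI / 2.
Proof.
  intros Hw; unfold Carg; destruct (Rlt_dec 0 (Re w)) as [_ | Hn]; [| lra].
  pose proof (atan_bound (Im w / Re w)).
  apply Rabs_def1; lra.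
Qed.

Lemma Re_Cpow_ge (w : C) (a : R) :
  0 < Re w -> 0 <= a <= 2 ->
  cos (a * (PI / 2)) * Rpower (Cmod w) a <= Re (Defs.Cpow w a).
Proof.
  intros Hw Ha.
  assert (Hw0 : w <> 0) by (intros ->; simpl in Hw; lra).
  rewrite Re_Cpow, Rmult_comm by exact Hw0.
  apply Rmult_le_compat_l; [left; apply Rpower_pos |].
  apply cos_le_of_Rabs_le.
  pose proof (Carg_right_half w Hw); pose proof PI_RGT_0 as HPI.
  rewrite Rabs_mult, (Rabs_pos_eq a) by lra.
  split; [apply Rmult_le_compat_l; lra | nra].
Qed.

Lemma Cmod_le_Cmod_1_add (z : C) : 0 <= Re z -> Cmod z <= Cmod (1 + z).
Proof.
  destruct z as [x y]; simpl; intros Hx.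
  unfold Cmod; simpl; apply sqrt_le_1_alt; nra.
Qed.

Lemma Cmod_1_add_pos (z : C) : 0 <= Re z -> 0 < Cmod (1 + z).
Proof.
  intros Hz; apply Cmod_gt_0; intros Hzero.
  apply (f_equal Re) in Hzero; destruct z; simpl in *; lra.
Qed.

Section Phi.

Variables Cc eps : R.
Hypothesis hC : 0 < Cc.

Lemma Cmod_phi_le z :
  H0 z -> Cmod (phi Cc eps z) <= Cmod (1 + z) + Cc * Rpower (Cmod (1 + z)) eps.
Proof.
  intros Hz; unfold H0 in Hz; unfold phi.
  eapply Rle_trans; [apply Cmod_triangle |].
  assert (Hz1 : (1 + z)%C <> 0)
    by (apply Cmod_gt_0, Cmod_1_add_pos; lra).
  rewrite Cmod_mult, Cmod_R, Rabs_pos_eq, Cmod_Cpow by (exact Hz1 || lra).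
  pose proof (Cmod_le_Cmod_1_add z); lra.
Qed.

Lemma Re_phi_gt z :
  0 <= eps <= 2 -> H0 z ->
  Cc * cos (eps * (PI / 2)) * Rpower (Cmod (1 + z)) eps < Re (phi Cc eps z).
Proof.
  intros Heps Hz; unfold H0 in Hz.
  assert (Hre : Re (phi Cc eps z) = Re z + Cc * Re (Defs.Cpow (1 + z) eps))
    by (unfold phi, Re; simpl; ring).
  rewrite Hre, Rmult_assoc.
  assert (Hz1 : 0 < Re (1 + z)) by (destruct z; simpl in *; lra).
  pose proof (Re_Cpow_ge (1 + z) eps Hz1 Heps) as Hpow.
  pose proof (Rmult_le_compat_l Cc _ _ (Rlt_le _ _ hC) Hpow); lra.
Qed.

Hypothesis heps : 0 < eps < 1.

Lemma Re_phi_dominates_Cmod_pow :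
  exists M, 0 <= M /\
    forall z, H0 z ->
      Cc * cos (eps * (PI / 2)) / Rpower 3 (eps / 2)
        * Rpower (Cmod (phi Cc eps z)) eps <= Re (phi Cc eps z) + M.
Proof.
  pose proof PI_RGT_0 as HPI.
  set (c := cos (eps * (PI / 2))).
  assert (Hc : 0 < c) by (apply cos_gt_0; nra).
  assert (Hb : 1 < sqrt 3) by (rewrite <- sqrt_1; apply sqrt_lt_1_alt; lra).
  assert (Hb_pow : Rpower (sqrt 3) eps = Rpower 3 (eps / 2))
    by (rewrite <- Rpower_sqrt, Rpower_mult by lra; f_equal; field).
  set (K := Cc * c / Rpower 3 (eps / 2)).
  pose proof (Rpower_pos 3 (eps / 2)) as H3_pos.
  assert (HK : K * Rpower 3 (eps / 2) = Cc * c) by (unfold K; field; lra).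
  assert (HK_pos : 0 < K) by (unfold K; apply Rdiv_lt_0_compat; nra).
  destruct (Rpower_le_of_le_add_pow (sqrt 3) Cc eps Hb ltac:(lra) ltac:(lra))
    as [M [HM Hbound]].
  exists (K * M); split; [nra |].
  intros z Hz.
  set (t := Cmod (1 + z)).
  assert (Ht : 0 < t) by (apply Cmod_1_add_pos; unfold H0 in Hz; lra).
  pose proof (Rpower_pos t eps) as Ht_pow.
  assert (Heps2 : 0 <= eps <= 2) by lra.
  pose proof (Re_phi_gt z Heps2 Hz) as Hre.
  fold c t in Hre.
  assert (Hw : 0 < Cmod (phi Cc eps z)).
  { pose proof (re_le_Cmod (phi Cc eps z)).
    pose proof (Rle_abs (Re (phi Cc eps z))).
    assert (0 < Cc * c * Rpower t eps) by (apply Rmult_lt_0_compat; nra).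
    lra. }
  pose proof (Hbound t _ Ht Hw (Cmod_phi_le z Hz)) as Hpow.
  rewrite <- Rpower_mult_distr, Hb_pow in Hpow by lra.
  apply (Rmult_le_compat_l K _ _ (Rlt_le _ _ HK_pos)) in Hpow.
  rewrite Rmult_plus_distr_l, <- Rmult_assoc, HK in Hpow.
  lra.
Qed.

End Phi.

Theorem lemma3p3 (Cc eps : R) (hC : 0 < Cc) (heps : 0 < eps < 1) :
  let K := Cc * cos (eps * (PI / 2)) / Rpower 3 (eps / 2) in
  exists k : R, 0 < k < 1 /\
    forall z : C, U Cc eps z ->
      k * exp (K * Rpower (Cmod z) eps) <= Cmod (Cexp z) /\
      Cmod (Cexp z) <= exp (Cmod z).
Proof.
  intros K.
  destruct (Re_phi_dominates_Cmod_pow Cc eps hC heps) as [M [HM Hdom]].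
  exists (exp (- M - 1)); split.
  - split; [apply exp_pos |].
    rewrite <- exp_0 at 2; apply exp_increasing; lra.
  - intros w [z [Hz ->]].
    specialize (Hdom z Hz).
    rewrite Cmod_Cexp; split.
    + rewrite <- exp_plus; apply exp_le; unfold K; lra.
    + apply exp_le.
      pose proof (re_le_Cmod (phi Cc eps z)).
      pose proof (Rle_abs (Re (phi Cc eps z))); lra.
Qed.
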